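(* Let $(V,\langle\cdot,\cdot\rangle)$ be a pseudo-Euclidean real vector space of signature $(k,l)$ with $k\ge2$, $l\ge2$, let $Z\subseteq V$ be a subspace with $q^+(Z)\ge1$, and let $H\subseteq V$ be a positive $(k-1)$-plane. Then $H^\perp$ is a Minkowski space of signature $(1,l)$; let $C^+(H^\perp)$ be either one of the two connected components of $\{w\in H^\perp:\langle w,w\rangle\ge0\}\setminus\{0\}$. The following are equivalent: (i) $H$ is $Z$-extendable; (ii) $q^+(H+Z)=k$; (iii) $q^+((H+Z)\cap H^\perp)\ge1$; (iv) there exists $z\in Z$ with $\langle z,u\rangle>0$ for all $u\in C^+(H^\perp)$; (v) $Z^\perp\cap C^+(H^\perp)=\emptyset$.
   Context: A pseudo-Euclidean space of signature $(k,l)$ is a finite-dimensional real vector space with a symmetric non-degenerate bilinear form whose Sylvester diagonal form has $k$ entries $+1$ and $l$ entries $-1$. For a subspace $L$, $q^+(L)$ denotes the number of $+1$'s in a diagonalization of the restriction of the form to $L$, and $L^\perp$ is the orthogonal complement in $V$. A positive $r$-plane is an $r$-dimensional subspace on which the form is positive definite. $H$ is $Z$-extendable if there is $z\in Z$ with $H+\mathbb{R}z$ a positive $k$-plane. *)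

From Stdlib Require Import Reals.
Open Scope R_scope.

(* Vectors of V = R^n are represented as functions nat -> R that vanish
   from index n on. *)
Definition Vec := nat -> R.
Definition vec (n : nat) (v : Vec) : Prop := forall i, (n <= i)%nat -> v i = 0.

Fixpoint fsum (m : nat) (f : nat -> R) : R :=
  match m with O => 0 | S p => fsum p f + f p end.

Definition bform (n : nat) (G : nat -> nat -> R) (v w : Vec) : R :=
  fsum n (fun i => fsum n (fun j => G i j * v i * w j)).

Definition symmetric (n : nat) (G : nat -> nat -> R) : Prop :=
  forall i j, (i < n)%nat -> (j < n)%nat -> G i j = G j i.

Definition nonzero (v : Vec) : Prop := exists i, v i <> 0.

Definition nondegenerate (n : nat) (G : nat -> nat -> R) : Prop :=
  forall v, vec n v -> (forall w, vec n w -> bform n G v w = 0) -> ~ nonzero v.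

Definition subspace (n : nat) (L : Vec -> Prop) : Prop :=
  (forall v, L v -> vec n v) /\ L (fun _ => 0) /\
  (forall v w, L v -> L w -> L (fun i => v i + w i)) /\
  (forall t v, L v -> L (fun i => t * v i)).

Definition lincomb (m : nat) (c : nat -> R) (b : nat -> Vec) : Vec :=
  fun i => fsum m (fun j => c j * b j i).

Definition basis (L : Vec -> Prop) (m : nat) (b : nat -> Vec) : Prop :=
  (forall j, (j < m)%nat -> L (b j)) /\
  (forall v, L v -> exists c, forall i, v i = lincomb m c b i) /\
  (forall c, (forall i, lincomb m c b i = 0) -> forall j, (j < m)%nat -> c j = 0).

Definition obasis n G (L : Vec -> Prop) (m : nat) (b : nat -> Vec) : Prop :=
  basis L m b /\
  (forall i j, (i < m)%nat -> (j < m)%nat -> i <> j -> bform n G (b i) (b j) = 0).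

Fixpoint npos n G (m : nat) (b : nat -> Vec) : nat :=
  match m with
  | O => O
  | S p => (npos n G p b +
            (if Rlt_dec 0 (bform n G (b p) (b p)) then 1 else 0))%nat
  end.

Fixpoint nneg n G (m : nat) (b : nat -> Vec) : nat :=
  match m with
  | O => O
  | S p => (nneg n G p b +
            (if Rlt_dec (bform n G (b p) (b p)) 0 then 1 else 0))%nat
  end.

(* q^+(L) = p : the number of positive entries of a diagonalization of the
   restriction of the form to L is p (well defined by Sylvester's law). *)
Definition qplus n G (L : Vec -> Prop) (p : nat) : Prop :=
  exists m b, obasis n G L m b /\ npos n G m b = p.

Definition signature n G (L : Vec -> Prop) (p q : nat) : Prop :=
  exists m b, obasis n G L m b /\ npos n G m b = p /\ nneg n G m b = q /\
    (forall j, (j < m)%nat -> bform n G (b j) (b j) <> 0).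

Definition whole (n : nat) : Vec -> Prop := vec n.

Definition pseudo_euclidean n G (k l : nat) : Prop :=
  symmetric n G /\ nondegenerate n G /\ signature n G (whole n) k l.

Definition ssum (L1 L2 : Vec -> Prop) : Vec -> Prop :=
  fun v => exists a b, L1 a /\ L2 b /\ forall i, v i = a i + b i.

Definition sinter (L1 L2 : Vec -> Prop) : Vec -> Prop := fun v => L1 v /\ L2 v.

Definition line (z : Vec) : Vec -> Prop := fun v => exists t, forall i, v i = t * z i.

Definition orth n G (L : Vec -> Prop) : Vec -> Prop :=
  fun w => vec n w /\ forall v, L v -> bform n G w v = 0.

Definition pos_plane n G (L : Vec -> Prop) (r : nat) : Prop :=
  subspace n L /\ (exists b, basis L r b) /\
  (forall v, L v -> nonzero v -> bform n G v v > 0).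

Definition extendable n G (k : nat) (Z H : Vec -> Prop) : Prop :=
  exists z, Z z /\ pos_plane n G (ssum H (line z)) k.

Definition open_set (n : nat) (U : Vec -> Prop) : Prop :=
  forall v, U v -> exists eps, eps > 0 /\
    forall w, vec n w -> (forall i, (i < n)%nat -> Rabs (w i - v i) < eps) -> U w.

Definition connected (n : nat) (A : Vec -> Prop) : Prop :=
  ~ exists U1 U2, open_set n U1 /\ open_set n U2 /\
      (forall a, A a -> U1 a \/ U2 a) /\
      (exists a, A a /\ U1 a) /\ (exists a, A a /\ U2 a) /\
      (forall a, A a -> U1 a -> U2 a -> False).

Definition connected_component (n : nat) (C A : Vec -> Prop) : Prop :=
  (forall x, C x -> A x) /\ (exists x, C x) /\ connected n C /\
  (forall D, (forall x, D x -> A x) -> connected n D ->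
     (exists x, D x /\ C x) -> forall x, D x -> C x).

Definition causal_cone n G (L : Vec -> Prop) : Vec -> Prop :=
  fun w => L w /\ bform n G w w >= 0 /\ nonzero w.

(* Let M = H^perp and W = (H + Z) /\ M. As H is positive definite, R^n = H + M
   orthogonally, so by Sylvester's law M is Lorentzian of signature (1, l): a nonzero
   vector of M orthogonal to a positive vector of M is negative. All five conditions turn
   out to be equivalent to "W contains a positive vector w".
   Given w, the plane H + R w is a positive k-plane inside H + Z, whence (i) and (ii);
   conversely a positive k-plane (or k positive orthogonal vectors) in H + Z contains a
   positive combination orthogonal to the k - 1 vectors of a basis of H, i.e. a positive
   vector of W. Writing w = a + z with a in H, <z,.> agrees with <w,.> on M and does not
   vanish on the causal cone of M, so it has constant sign on the connected set C: this
   is (iv), and (iv) implies (v). If W has no positive vector, M contains a nonzero causal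
   u orthogonal to W, hence to Z; the component C contains a half cone
   {x causal : <e,x> > 0} (which is star-shaped, hence connected), so u or -u lies in
   Z^perp /\ C. *)

From Stdlib Require Import Reals Lra Lia Psatz Arith Classical FunctionalExtensionality Wf_nat.
Open Scope R_scope.

Lemma fsum_S m f : fsum (S m) f = fsum m f + f m.
Proof. reflexivity. Qed.

Lemma fsum_ext m f g : (forall i, (i < m)%nat -> f i = g i) -> fsum m f = fsum m g.
Proof.
  induction m as [|m IH]; intros Hfg; simpl; [reflexivity|].
  rewrite IH by (intros; apply Hfg; lia). rewrite Hfg by lia. reflexivity.
Qed.

Lemma fsum_plus m f g : fsum m (fun i => f i + g i) = fsum m f + fsum m g.
Proof. induction m; simpl; [lra|]. rewrite IHm; lra. Qed.

Lemma fsum_scal m a f : fsum m (fun i => a * f i) = a * fsum m f.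
Proof. induction m; simpl; [lra|]. rewrite IHm; lra. Qed.

Lemma fsum_lin2 m a b f g :
  fsum m (fun i => a * f i + b * g i) = a * fsum m f + b * fsum m g.
Proof. rewrite fsum_plus, !fsum_scal. reflexivity. Qed.

Lemma fsum_zero m f : (forall i, (i < m)%nat -> f i = 0) -> fsum m f = 0.
Proof.
  induction m as [|m IH]; intros Hf; simpl; [lra|].
  rewrite IH by (intros; apply Hf; lia). rewrite Hf by lia. lra.
Qed.

Lemma fsum_single m f j : (j < m)%nat ->
  (forall i, (i < m)%nat -> i <> j -> f i = 0) -> fsum m f = f j.
Proof.
  induction m as [|m IH]; intros Hj Hf; [lia|]. simpl.
  destruct (Nat.eq_dec j m) as [->|Hne].
  - rewrite fsum_zero; [lra|]. intros; apply Hf; lia.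
  - rewrite IH by (lia || (intros; apply Hf; lia)). rewrite (Hf m) by lia. lra.
Qed.

Lemma fsum_swap m r F :
  fsum m (fun i => fsum r (fun j => F i j)) = fsum r (fun j => fsum m (fun i => F i j)).
Proof.
  induction m; simpl.
  - symmetry; apply fsum_zero; reflexivity.
  - rewrite IHm, <- fsum_plus. reflexivity.
Qed.

Lemma fsum_app m r F : fsum (m + r) F = fsum m F + fsum r (fun j => F (m + j)%nat).
Proof.
  induction r; simpl.
  - rewrite Nat.add_0_r; lra.
  - rewrite Nat.add_succ_r; simpl. rewrite IHr; lra.
Qed.

Lemma fsum_le m f g : (forall i, (i < m)%nat -> f i <= g i) -> fsum m f <= fsum m g.
Proof.
  induction m as [|m IH]; simpl; intros Hfg; [lra|].
  pose proof (Hfg m ltac:(lia)). pose proof (IH ltac:(intros; apply Hfg; lia)). lra.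
Qed.

Lemma fsum_nonneg m f : (forall i, (i < m)%nat -> 0 <= f i) -> 0 <= fsum m f.
Proof. intros Hf. rewrite <- (fsum_zero m (fun _ => 0)) by auto. now apply fsum_le. Qed.

Lemma fsum_nonpos m f : (forall i, (i < m)%nat -> f i <= 0) -> fsum m f <= 0.
Proof. intros Hf. rewrite <- (fsum_zero m (fun _ => 0)) by auto. now apply fsum_le. Qed.

Lemma fsum_term_le m f i : (i < m)%nat ->
  (forall j, (j < m)%nat -> 0 <= f j) -> f i <= fsum m f.
Proof.
  induction m as [|m IH]; intros Hi Hf; [lia|]. simpl.
  pose proof (fsum_nonneg m f ltac:(intros; apply Hf; lia)).
  destruct (Nat.eq_dec i m) as [->|]; [lra|].
  pose proof (IH ltac:(lia) ltac:(intros; apply Hf; lia)). pose proof (Hf m ltac:(lia)). lra.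
Qed.

Lemma fsum_pos m f j : (j < m)%nat ->
  (forall i, (i < m)%nat -> 0 <= f i) -> 0 < f j -> 0 < fsum m f.
Proof. intros Hj Hf Hfj. pose proof (fsum_term_le m f j Hj Hf). lra. Qed.

Lemma fsum_abs m f : Rabs (fsum m f) <= fsum m (fun i => Rabs (f i)).
Proof.
  induction m; simpl; [rewrite Rabs_R0; lra|].
  eapply Rle_trans; [apply Rabs_triang|]. lra.
Qed.

Fixpoint count_true (Q : nat -> bool) (r : nat) : nat :=
  match r with O => O | S p => (count_true Q p + (if Q p then 1 else 0))%nat end.

Lemma count_true_ext Q Q' r :
  (forall i, (i < r)%nat -> Q i = Q' i) -> count_true Q r = count_true Q' r.
Proof.
  induction r as [|r IH]; simpl; intros HQ; auto.
  rewrite IH by (intros; apply HQ; lia). rewrite HQ by lia. reflexivity.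
Qed.

Lemma count_true_app Q r s :
  count_true Q (r + s) = (count_true Q r + count_true (fun i => Q (r + i)%nat) s)%nat.
Proof.
  induction s; simpl; [rewrite Nat.add_0_r; lia|].
  rewrite Nat.add_succ_r; simpl. rewrite IHs; lia.
Qed.

Lemma count_true_negb Q r : (count_true Q r + count_true (fun i => negb (Q i)) r)%nat = r.
Proof. induction r; simpl; auto. destruct (Q r); simpl; lia. Qed.

Lemma count_true_const r : count_true (fun _ => true) r = r.
Proof. induction r; simpl; lia. Qed.

Lemma finite_choice {A} (x0 : A) (P : nat -> A -> Prop) m :
  (forall j, (j < m)%nat -> exists x, P j x) ->
  exists f : nat -> A, forall j, (j < m)%nat -> P j (f j).
Proof.
  induction m as [|m IH]; intros HP.
  - exists (fun _ => x0); intros; lia.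
  - destruct IH as [f Hf]; [intros; apply HP; lia|].
    destruct (HP m ltac:(lia)) as [x Hx].
    exists (fun j => if Nat.eqb j m then x else f j).
    intros j Hj. destruct (Nat.eqb_spec j m); subst; auto. apply Hf; lia.
Qed.

(** * Underdetermined homogeneous linear systems *)

(* Unknowns [c j] for [j < m]; equation [i < r] reads [sum_j c j * a j i = 0]
   and is imposed only when [Q i] holds. *)
Definition solves (m : nat) (a : nat -> nat -> R) (Q : nat -> bool) (r : nat) (c : nat -> R) :=
  forall i, (i < r)%nat -> Q i = true -> fsum m (fun j => c j * a j i) = 0.

Definition nontrivial (m : nat) (c : nat -> R) := exists j, (j < m)%nat /\ c j <> 0.

Lemma solves_pivot p r a Q c :
  a p r <> 0 -> nontrivial p c ->
  solves p (fun j i => a j i - a j r * a p i / a p r) Q r c ->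
  exists c', nontrivial (S p) c' /\ solves (S p) a Q (S r) c'.
Proof.
  intros Hp [j1 [Hj1 Hc1]] Hs.
  set (S0 := fsum p (fun j => c j * a j r)).
  exists (fun j => if Nat.ltb j p then c j else - S0 / a p r). split.
  { exists j1. split; [lia|]. destruct (Nat.ltb_spec j1 p); [auto|lia]. }
  intros i Hi HQ. rewrite fsum_S.
  rewrite (fsum_ext p _ (fun j => c j * a j i))
    by (intros j Hj; destruct (Nat.ltb_spec j p); [auto|lia]).
  rewrite Nat.ltb_irrefl.
  destruct (Nat.eq_dec i r) as [->|Hne]; [unfold S0; field; auto|].
  specialize (Hs i ltac:(lia) HQ).
  rewrite (fsum_ext p _ (fun j => 1 * (c j * a j i) + (- (a p i / a p r)) * (c j * a j r))),
    fsum_lin2 in Hs by (intros; field; auto).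
  fold S0 in Hs.
  replace (fsum p (fun j => c j * a j i)) with (a p i / a p r * S0) by lra.
  field. auto.
Qed.

(* A row operation that moves a nonzero pivot into the last row. *)
Lemma solves_add_row p j0 a Q r c : (j0 < p)%nat ->
  nontrivial (S p) c ->
  solves (S p) (fun j i => if Nat.eqb j p then a p i + a j0 i else a j i) Q r c ->
  exists c', nontrivial (S p) c' /\ solves (S p) a Q r c'.
Proof.
  intros Hj0 [j1 [Hj1 Hc1]] Hs.
  exists (fun j => c j + (if Nat.eqb j j0 then c p else 0)). split.
  - apply NNPP; intro Hno.
    assert (Hz : forall j, (j < S p)%nat -> c j + (if Nat.eqb j j0 then c p else 0) = 0)
      by (intros j Hj; apply NNPP; intro; apply Hno; exists j; split; auto).
    assert (Hcp : c p = 0).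
    { specialize (Hz p ltac:(lia)). destruct (Nat.eqb_spec p j0); [lia|lra]. }
    apply Hc1. specialize (Hz j1 Hj1). destruct (Nat.eqb_spec j1 j0); lra.
  - intros i Hi HQ. transitivity (fsum (S p) (fun j => c j * (if Nat.eqb j p then a p i + a j0 i else a j i)));
      [|exact (Hs i Hi HQ)].
    rewrite !fsum_S, Nat.eqb_refl.
    destruct (Nat.eqb_spec p j0); [lia|].
    rewrite (fsum_ext p (fun j => c j * (if Nat.eqb j p then _ else _)) (fun j => c j * a j i))
      by (intros j Hj; destruct (Nat.eqb_spec j p); [lia|auto]).
    rewrite (fsum_ext p _ (fun j => 1 * (c j * a j i) + c p * (if Nat.eqb j j0 then a j i else 0)))
      by (intros j Hj; destruct (Nat.eqb_spec j j0); ring).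
    rewrite fsum_lin2, (fsum_single p (fun j => if Nat.eqb j j0 then a j i else 0) j0 Hj0),
      Nat.eqb_refl by (intros j _ Hne; destruct (Nat.eqb_spec j j0); [lia|auto]).
    ring.
Qed.

Lemma underdetermined_system r m a Q : (count_true Q r < m)%nat ->
  exists c, nontrivial m c /\ solves m a Q r c.
Proof.
  revert m a. induction r as [|r IH]; intros m a Hc.
  - exists (fun _ => 1). split; [exists 0%nat; simpl in Hc; split; [lia|lra]|]. intros i Hi; lia.
  - simpl in Hc. destruct (Q r) eqn:EQ.
    2:{ destruct (IH m a ltac:(lia)) as [c [Hnz Hs]]. exists c; split; auto.
        intros i Hi HQ. destruct (Nat.eq_dec i r) as [->|]; [congruence|]. apply Hs; auto; lia. }
    destruct m as [|p]; [lia|].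
    assert (Piv : forall b, b p r <> 0 -> exists c, nontrivial (S p) c /\ solves (S p) b Q (S r) c).
    { intros b Hb. destruct (IH p (fun j i => b j i - b j r * b p i / b p r) ltac:(lia))
        as [c [Hnz Hs]].
      exact (solves_pivot p r b Q c Hb Hnz Hs). }
    destruct (classic (exists j0, (j0 < S p)%nat /\ a j0 r <> 0)) as [[j0 [Hj0 Ha]]|Hall].
    + destruct (Req_dec (a p r) 0) as [Hp0|Hp0]; [|now apply Piv].
      assert (Hj0p : (j0 < p)%nat) by (destruct (Nat.eq_dec j0 p); [subst; contradiction|lia]).
      destruct (Piv (fun j i => if Nat.eqb j p then a p i + a j0 i else a j i))
        as [c [Hnz Hs]]; [rewrite Nat.eqb_refl; lra|].
      exact (solves_add_row p j0 a Q (S r) c Hj0p Hnz Hs).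
    + destruct (IH (S p) a ltac:(lia)) as [c [Hnz Hs]]. exists c; split; auto.
      intros i Hi HQ. destruct (Nat.eq_dec i r) as [->|Hne]; [|apply Hs; auto; lia].
      apply fsum_zero. intros j Hj.
      destruct (Req_dec (a j r) 0) as [->|Hne]; [ring|].
      exfalso; apply Hall; eauto.
Qed.

(** * Linear algebra in [R^n] *)

Definition lin_indep m (f : nat -> Vec) :=
  forall c, (forall i, lincomb m c f i = 0) -> forall j, (j < m)%nat -> c j = 0.

Definition in_span m (f : nat -> Vec) (v : Vec) := exists x, forall i, v i = lincomb m x f i.

Definition ext m (b : nat -> Vec) (w : Vec) : nat -> Vec :=
  fun j => if Nat.ltb j m then b j else w.

Lemma lincomb_S m c f : lincomb (S m) c f = fun i => lincomb m c f i + c m * f m i.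
Proof. reflexivity. Qed.

Lemma lincomb_ext m c c' f f' : (forall j, (j < m)%nat -> c j = c' j /\ f j = f' j) ->
  lincomb m c f = lincomb m c' f'.
Proof.
  intros H. apply functional_extensionality; intros i. unfold lincomb.
  apply fsum_ext; intros j Hj. destruct (H j Hj) as [-> ->]. reflexivity.
Qed.

Lemma lincomb_ext_S m c b w : lincomb (S m) c (ext m b w) = fun i => lincomb m c b i + c m * w i.
Proof.
  rewrite lincomb_S, (lincomb_ext m c c (ext m b w) b).
  - unfold ext. rewrite Nat.ltb_irrefl. reflexivity.
  - intros j Hj. unfold ext. destruct (Nat.ltb_spec j m); [auto|lia].
Qed.

Lemma lin_indep_nonzero m f j : lin_indep m f -> (j < m)%nat -> nonzero (f j).
Proof.
  intros Hi Hj. apply NNPP; intros Hn.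
  set (e := fun i => if Nat.eqb i j then 1 else 0).
  assert (He : e j = 0).
  { apply Hi; auto. intros x. unfold lincomb. rewrite (fsum_single m _ j Hj).
    - unfold e. rewrite Nat.eqb_refl, Rmult_1_l.
      apply NNPP; intro Hx; apply Hn. now exists x.
    - intros i _ Hne. unfold e. destruct (Nat.eqb_spec i j); [lia|ring]. }
  unfold e in He. rewrite Nat.eqb_refl in He. lra.
Qed.

Lemma lin_indep_le m r f g : (forall j, (j < m)%nat -> exists x, f j = lincomb r x g) ->
  lin_indep m f -> (m <= r)%nat.
Proof.
  intros Hs Hi. destruct (le_lt_dec m r) as [|Hlt]; auto. exfalso.
  destruct (finite_choice (fun _ => 0) (fun j x => f j = lincomb r x g) m Hs) as [A HA].
  destruct (underdetermined_system r m A (fun _ => true)) as [c [[j [Hj Hc]] Heq]].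
  { rewrite count_true_const; auto. }
  apply Hc, Hi; auto. intros i. unfold lincomb.
  rewrite (fsum_ext m _ (fun j => fsum r (fun t => c j * A j t * g t i))).
  2:{ intros j' Hj'. rewrite HA by auto. unfold lincomb. rewrite <- fsum_scal.
      apply fsum_ext; intros; ring. }
  rewrite fsum_swap. apply fsum_zero. intros t Ht.
  rewrite (fsum_ext m _ (fun j => g t i * (c j * A j t))), fsum_scal, Heq by (auto || intros; ring).
  ring.
Qed.

Lemma lin_indep_ext m f v : lin_indep m f -> ~ in_span m f v -> lin_indep (S m) (ext m f v).
Proof.
  intros Hi Hv c Hc j Hj. rewrite lincomb_ext_S in Hc.
  assert (Hcm : c m = 0).
  { apply NNPP; intro Hcm. apply Hv. exists (fun j => - c j / c m). intros i.
    specialize (Hc i). unfold lincomb in *.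
    rewrite (fsum_ext m _ (fun j => (- / c m) * (c j * f j i))), fsum_scal by (intros; field; auto).
    apply Rmult_eq_reg_l with (c m); auto. field_simplify; auto. lra. }
  destruct (Nat.eq_dec j m) as [->|]; auto.
  apply Hi; [|lia]. intros i. specialize (Hc i). rewrite Hcm in Hc. lra.
Qed.

Lemma basis_lin_indep L m b : basis L m b -> lin_indep m b.
Proof. intros [_ [_ H]]. exact H. Qed.

Lemma basis_span L m b v : basis L m b -> L v -> exists x, v = lincomb m x b.
Proof.
  intros [_ [H _]] Hv. destruct (H v Hv) as [x Hx].
  exists x. apply functional_extensionality; auto.
Qed.

Section Dim.
Variable n : nat.

Lemma subspace_lincomb L m c f : subspace n L -> (forall j, (j < m)%nat -> L (f j)) ->
  L (lincomb m c f).
Proof.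
  intros [_ [H0 [Ha Hs]]] Hf. induction m; [exact H0|].
  rewrite lincomb_S. apply Ha; [apply IHm; intros; apply Hf; lia|]. apply Hs, Hf; lia.
Qed.

Lemma subspace_whole : subspace n (whole n).
Proof.
  unfold whole, vec. repeat split; intros; auto.
  - rewrite H, H0 by auto; ring.
  - rewrite H by auto; ring.
Qed.

Lemma vec_lincomb m c f : (forall j, (j < m)%nat -> vec n (f j)) -> vec n (lincomb m c f).
Proof. apply (subspace_lincomb (whole n)), subspace_whole. Qed.

Lemma lin_indep_le_dim m f : (forall j, (j < m)%nat -> vec n (f j)) -> lin_indep m f ->
  (m <= n)%nat.
Proof.
  intros Hv. apply (lin_indep_le m n f (fun j i => if Nat.eqb i j then 1 else 0)).
  intros j Hj. exists (f j). apply functional_extensionality; intros i. unfold lincomb.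
  destruct (le_lt_dec n i) as [Hi|Hi].
  - rewrite Hv by auto. symmetry; apply fsum_zero; intros t Ht.
    destruct (Nat.eqb_spec i t); [lia|ring].
  - rewrite (fsum_single n _ i Hi), Nat.eqb_refl; [ring|].
    intros t _ Hne. destruct (Nat.eqb_spec i t); [lia|ring].
Qed.

(* Extend an independent family inside [L] until it spans [L]; [n - m] decreases. *)
Lemma basis_exists L : subspace n L -> exists m b, basis L m b.
Proof.
  intros HL.
  assert (Grow : forall d m f, (n - m = d)%nat -> (forall j, (j < m)%nat -> L (f j)) ->
            lin_indep m f -> exists m b, basis L m b).
  { induction d as [|d IH]; intros m f Hd Hf Hi;
      (destruct (classic (forall v, L v -> in_span m f v)) as [Hs|Hs];
        [exists m, f; split; auto|]);
      apply not_all_ex_not in Hs as [v Hv]; apply imply_to_and in Hv as [Lv Hv];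
      pose proof (lin_indep_ext m f v Hi Hv) as Hi';
      assert (Hf' : forall j, (j < S m)%nat -> L (ext m f v j))
        by (intros j Hj; unfold ext; destruct (Nat.ltb_spec j m); auto);
      pose proof (lin_indep_le_dim (S m) (ext m f v) ltac:(intros; apply (proj1 HL); auto) Hi').
    - lia.
    - apply (IH (S m) (ext m f v)); auto. lia. }
  apply (Grow n 0%nat (fun _ _ => 0)); [lia|intros; lia|intros c _ j Hj; lia].
Qed.

Lemma subspace_ssum L1 L2 : subspace n L1 -> subspace n L2 -> subspace n (ssum L1 L2).
Proof.
  intros [V1 [Z1 [A1 S1]]] [V2 [Z2 [A2 S2]]]. split; [|split; [|split]].
  - intros v [a [b [Ha [Hb E]]]] i Hi. rewrite E, V1, V2 by auto; ring.
  - exists (fun _ => 0), (fun _ => 0). repeat split; auto. intros; ring.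
  - intros v w [a [b [Ha [Hb E]]]] [a' [b' [Ha' [Hb' E']]]].
    exists (fun i => a i + a' i), (fun i => b i + b' i). repeat split; auto.
    intros i; rewrite E, E'; ring.
  - intros t v [a [b [Ha [Hb E]]]]. exists (fun i => t * a i), (fun i => t * b i).
    repeat split; auto. intros i; rewrite E; ring.
Qed.

Lemma subspace_sinter L1 L2 : subspace n L1 -> subspace n L2 -> subspace n (sinter L1 L2).
Proof.
  intros [V1 [Z1 [A1 S1]]] [V2 [Z2 [A2 S2]]]. split; [|split; [|split]].
  - intros v [H1 _]; auto.
  - split; auto.
  - intros v w [] []; split; auto.
  - intros t v []; split; auto.
Qed.

Lemma subspace_line z : vec n z -> subspace n (line z).
Proof.
  intros Hz. split; [|split; [|split]].
  - intros v [t E] i Hi. rewrite E, Hz by auto; ring.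
  - exists 0; intros; ring.
  - intros v w [t E] [t' E']. exists (t + t'); intros i; rewrite E, E'; ring.
  - intros s v [t E]. exists (s * t); intros i; rewrite E; ring.
Qed.

End Dim.

Section Form.
Variables (n : nat) (G : nat -> nat -> R).
Notation B := (bform n G).

Lemma bform_addl v v' w : B (fun i => v i + v' i) w = B v w + B v' w.
Proof.
  unfold bform. rewrite <- fsum_plus. apply fsum_ext; intros.
  rewrite <- fsum_plus. apply fsum_ext; intros. ring.
Qed.

Lemma bform_addr v w w' : B v (fun i => w i + w' i) = B v w + B v w'.
Proof.
  unfold bform. rewrite <- fsum_plus. apply fsum_ext; intros.
  rewrite <- fsum_plus. apply fsum_ext; intros. ring.
Qed.

Lemma bform_scall a v w : B (fun i => a * v i) w = a * B v w.
Proof.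
  unfold bform. rewrite <- fsum_scal. apply fsum_ext; intros.
  rewrite <- fsum_scal. apply fsum_ext; intros. ring.
Qed.

Lemma bform_scalr a v w : B v (fun i => a * w i) = a * B v w.
Proof.
  unfold bform. rewrite <- fsum_scal. apply fsum_ext; intros.
  rewrite <- fsum_scal. apply fsum_ext; intros. ring.
Qed.

Lemma bform_zerol w : B (fun _ => 0) w = 0.
Proof. unfold bform. apply fsum_zero; intros. apply fsum_zero; intros. ring. Qed.

Lemma bform_zeror w : B w (fun _ => 0) = 0.
Proof. unfold bform. apply fsum_zero; intros. apply fsum_zero; intros. ring. Qed.

Lemma bform_subl v v' w : B (fun i => v i - v' i) w = B v w - B v' w.
Proof.
  replace (fun i => v i - v' i) with (fun i => v i + (-1) * v' i)
    by (apply functional_extensionality; intros; ring).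
  rewrite bform_addl, bform_scall. ring.
Qed.

Lemma bform_subr v w w' : B v (fun i => w i - w' i) = B v w - B v w'.
Proof.
  replace (fun i => w i - w' i) with (fun i => w i + (-1) * w' i)
    by (apply functional_extensionality; intros; ring).
  rewrite bform_addr, bform_scalr. ring.
Qed.

Lemma bform_sym v w : symmetric n G -> B v w = B w v.
Proof.
  intros HS. unfold bform. rewrite fsum_swap.
  apply fsum_ext; intros i Hi. apply fsum_ext; intros j Hj. rewrite HS by auto. ring.
Qed.

Lemma nonzero_of_bform_neq0 v : B v v <> 0 -> nonzero v.
Proof.
  intros Hv. apply NNPP; intros Hn. apply Hv.
  replace v with (fun _ : nat => 0) by (apply functional_extensionality; intros i;
    apply NNPP; intro Hi; apply Hn; exists i; auto).
  apply bform_zerol.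
Qed.

Lemma bform_lincomb_l m c f w : B (lincomb m c f) w = fsum m (fun j => c j * B (f j) w).
Proof.
  induction m; [apply bform_zerol|].
  rewrite lincomb_S, bform_addl, IHm, bform_scall. reflexivity.
Qed.

Lemma bform_lincomb_r m c f w : B w (lincomb m c f) = fsum m (fun j => c j * B w (f j)).
Proof.
  induction m; [apply bform_zeror|].
  rewrite lincomb_S, bform_addr, IHm, bform_scalr. reflexivity.
Qed.

Definition orthogonal_family m (u : nat -> Vec) :=
  forall i j, (i < m)%nat -> (j < m)%nat -> i <> j -> B (u i) (u j) = 0.

Lemma bform_lincomb_orth_l m x u i : orthogonal_family m u -> (i < m)%nat ->
  B (lincomb m x u) (u i) = x i * B (u i) (u i).
Proof.
  intros Ho Hi. rewrite bform_lincomb_l, (fsum_single m _ i Hi); auto.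
  intros j Hj Hne. rewrite Ho by auto. ring.
Qed.

Lemma bform_lincomb_orth_r m x u i : orthogonal_family m u -> (i < m)%nat ->
  B (u i) (lincomb m x u) = x i * B (u i) (u i).
Proof.
  intros Ho Hi. rewrite bform_lincomb_r, (fsum_single m _ i Hi); auto.
  intros j Hj Hne. rewrite Ho by auto. ring.
Qed.

Lemma bform_lincomb_diag m x u : orthogonal_family m u ->
  B (lincomb m x u) (lincomb m x u) = fsum m (fun i => x i * x i * B (u i) (u i)).
Proof.
  intros Ho. rewrite bform_lincomb_l. apply fsum_ext; intros i Hi.
  rewrite bform_lincomb_orth_r by auto. ring.
Qed.

Lemma orthogonal_lin_indep m u : orthogonal_family m u ->
  (forall j, (j < m)%nat -> B (u j) (u j) <> 0) -> lin_indep m u.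
Proof.
  intros Ho Hd c Hc j Hj.
  assert (Hz : lincomb m c u = fun _ => 0) by (apply functional_extensionality; auto).
  pose proof (bform_lincomb_orth_l m c u j Ho Hj) as E. rewrite Hz, bform_zerol in E.
  symmetry in E. apply Rmult_integral in E as [|]; [auto|now destruct (Hd j Hj)].
Qed.

Lemma orthogonal_family_ext m f w : orthogonal_family m f ->
  (forall j, (j < m)%nat -> B (f j) w = 0 /\ B w (f j) = 0) ->
  orthogonal_family (S m) (ext m f w).
Proof.
  intros Hf Hw i j Hi Hj Hij. unfold ext.
  destruct (Nat.ltb_spec i m), (Nat.ltb_spec j m); [apply Hf|apply Hw|apply Hw|]; auto; lia.
Qed.

Lemma subspace_orth L : subspace n (orth n G L).
Proof.
  split; [|split; [|split]].
  - intros v [Hv _]; auto.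
  - split; [intros i _; auto|intros; apply bform_zerol].
  - intros v w [Hv Hv'] [Hw Hw']. split; [intros i Hi; rewrite Hv, Hw by auto; ring|].
    intros x Lx. rewrite bform_addl, Hv', Hw' by auto; ring.
  - intros t v [Hv Hv']. split; [intros i Hi; rewrite Hv by auto; ring|].
    intros x Lx. rewrite bform_scall, Hv' by auto; ring.
Qed.

(** * Orthogonal bases *)

Hypothesis HS : symmetric n G.

Lemma subspace_orth_vec L w : subspace n L -> subspace n (fun v => L v /\ B v w = 0).
Proof.
  intros [Hv [H0 [Ha Hs]]]. split; [|split; [|split]].
  - intros v [Lv _]; auto.
  - split; auto. apply bform_zerol.
  - intros v v' [] []. split; auto. rewrite bform_addl. lra.
  - intros t v []. split; auto. rewrite bform_scall. nra.
Qed.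

Lemma isotropic_orthogonal L : subspace n L -> (forall v, L v -> B v v = 0) ->
  forall v w, L v -> L w -> B v w = 0.
Proof.
  intros HL Hz v w Lv Lw.
  pose proof (Hz _ (proj1 (proj2 (proj2 HL)) v w Lv Lw)) as E.
  rewrite bform_addl, !bform_addr, Hz, Hz, (bform_sym w v HS) in E by auto. lra.
Qed.

Lemma lin_indep_ext_orth m b w : lin_indep m b -> (forall j, (j < m)%nat -> B (b j) w = 0) ->
  B w w <> 0 -> lin_indep (S m) (ext m b w).
Proof.
  intros Hi Ho Hw c Hc. rewrite lincomb_ext_S in Hc.
  assert (E : B (fun i => lincomb m c b i + c m * w i) w = 0)
    by (replace (fun i => _) with (fun _ : nat => 0)
          by (apply functional_extensionality; intros; now rewrite Hc);
        apply bform_zerol).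
  rewrite bform_addl, bform_scall, bform_lincomb_l, fsum_zero in E
    by (intros j Hj; rewrite Ho by auto; ring).
  rewrite Rplus_0_l in E.
  assert (Hcm : c m = 0) by (apply Rmult_integral in E as [|]; [auto|lra]).
  intros j Hj. destruct (Nat.eq_dec j m) as [->|Hne]; auto.
  apply Hi; [|lia]. intros i. specialize (Hc i). rewrite Hcm in Hc. lra.
Qed.

(* Split off a non-isotropic [w] and recurse on its orthogonal in [L], which has
   smaller dimension; a totally isotropic [L] is diagonal in any basis. *)
Lemma obasis_exists L : subspace n L -> exists m b, obasis n G L m b.
Proof.
  intros HL. destruct (basis_exists n L HL) as [d [b Hb]]. revert L HL b Hb.
  induction d as [d IH] using (well_founded_induction lt_wf). intros L HL b Hb.
  destruct (classic (forall v, L v -> B v v = 0)) as [Hz|Hnz].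
  { exists d, b. split; auto. intros i j Hi Hj _.
    apply (isotropic_orthogonal L); auto; apply (proj1 Hb); auto. }
  apply not_all_ex_not in Hnz as [w Hw]. apply imply_to_and in Hw as [Lw Hw].
  set (L' := fun v => L v /\ B v w = 0).
  assert (HL' : subspace n L') by (apply subspace_orth_vec; auto).
  destruct (basis_exists n L' HL') as [m' [b' Hb']].
  assert (Hlt : (m' < d)%nat).
  { enough (S m' <= d)%nat by lia.
    apply (lin_indep_le (S m') d (ext m' b' w) b).
    - intros j Hj. apply (basis_span L d b); auto.
      unfold ext. destruct (Nat.ltb_spec j m'); auto. apply (proj1 Hb' j); auto.
    - apply lin_indep_ext_orth; auto. apply (basis_lin_indep L'); auto.
      intros j Hj. apply (proj1 Hb' j Hj). }
  destruct (IH m' Hlt L' HL' b' Hb') as [m'' [b'' [Hb'' Hob'']]].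
  assert (Lb'' : forall j, (j < m'')%nat -> L' (b'' j)) by apply (proj1 Hb'').
  exists (S m''), (ext m'' b'' w). split; [split; [|split]|].
  - intros j Hj. unfold ext. destruct (Nat.ltb_spec j m''); auto. apply Lb''; auto.
  - intros v Lv. set (al := B v w / B w w).
    assert (L'v : L' (fun i => v i - al * w i)).
    { split.
      - replace (fun i => v i - al * w i) with (fun i => v i + (-al) * w i)
          by (apply functional_extensionality; intros; ring).
        destruct HL as [_ [_ [Ha Hs]]]. auto.
      - rewrite bform_subl, bform_scall. unfold al. field. auto. }
    destruct (basis_span L' m'' b'' _ Hb'' L'v) as [x Hx].
    exists (fun j => if Nat.ltb j m'' then x j else al). intros i.
    rewrite lincomb_ext_S, Nat.ltb_irrefl,
      (lincomb_ext m'' _ x b'' b'') by (intros j Hj; destruct (Nat.ltb_spec j m''); auto; lia).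
    rewrite <- Hx. ring.
  - apply lin_indep_ext_orth; auto. apply (basis_lin_indep L'); auto.
    intros j Hj. apply (proj2 (Lb'' j Hj)).
  - apply orthogonal_family_ext; auto. intros j Hj.
    rewrite (bform_sym w) by auto. split; apply (proj2 (Lb'' j Hj)).
Qed.

End Form.

(** * Sylvester's law of inertia *)

Section Inertia.
Variables (n : nat) (G : nat -> nat -> R).
Notation B := (bform n G).

Definition posb (x : R) : bool := if Rlt_dec 0 x then true else false.

Lemma posb_true x : posb x = true <-> 0 < x.
Proof. unfold posb; destruct Rlt_dec; split; intros; auto; try discriminate; lra. Qed.

Lemma npos_count_true m b : npos n G m b = count_true (fun j => posb (B (b j) (b j))) m.
Proof. induction m; simpl; auto. rewrite IHm. unfold posb. destruct Rlt_dec; reflexivity. Qed.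

(* Unknowns: the coefficients on [u]. Equations: orthogonality to the [g i] with [Q i],
   and vanishing of every coefficient of a non-positive [u j]. *)
Lemma exists_pos_comb_orth s u r g Q : orthogonal_family n G s u ->
  (count_true Q r < npos n G s u)%nat ->
  exists c, B (lincomb s c u) (lincomb s c u) > 0 /\
    forall i, (i < r)%nat -> Q i = true -> B (lincomb s c u) (g i) = 0.
Proof.
  intros Ho Hc. rewrite npos_count_true in Hc.
  set (P := fun j => posb (B (u j) (u j))) in *.
  set (a := fun j i => if Nat.ltb i r then B (u j) (g i) else if Nat.eqb j (i - r) then 1 else 0).
  set (Q' := fun i => if Nat.ltb i r then Q i else negb (P (i - r)%nat)).
  destruct (underdetermined_system (r + s) s a Q') as [c [[j1 [Hj1 Hc1]] Heq]].
  { rewrite count_true_app, (count_true_ext Q' Q r)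
      by (intros i Hi; unfold Q'; destruct (Nat.ltb_spec i r); [auto|lia]).
    rewrite (count_true_ext _ (fun i => negb (P i)) s).
    2:{ intros i Hi; unfold Q'. destruct (Nat.ltb_spec (r + i) r); [lia|].
        do 3 f_equal. lia. }
    pose proof (count_true_negb P s). lia. }
  assert (Hz : forall i, (i < s)%nat -> P i = false -> c i = 0).
  { intros i Hi HP. specialize (Heq (r + i)%nat ltac:(lia)).
    unfold Q' in Heq. destruct (Nat.ltb_spec (r + i) r); [lia|].
    replace (r + i - r)%nat with i in Heq by lia. rewrite HP in Heq.
    rewrite (fsum_single s _ i Hi) in Heq by
      (intros j Hj Hne; unfold a; destruct (Nat.ltb_spec (r + i) r); [lia|];
       replace (r + i - r)%nat with i by lia; destruct (Nat.eqb_spec j i); [lia|ring]).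
    unfold a in Heq. destruct (Nat.ltb_spec (r + i) r); [lia|].
    replace (r + i - r)%nat with i in Heq by lia. rewrite Nat.eqb_refl in Heq. lra. }
  exists c. split.
  - rewrite bform_lincomb_diag by auto. apply Rlt_gt, (fsum_pos s _ j1 Hj1).
    + intros i Hi. destruct (P i) eqn:EP.
      * apply posb_true in EP. nra.
      * rewrite Hz by auto. lra.
    + destruct (P j1) eqn:EP; [apply posb_true in EP; pose proof (Rsqr_pos_lt _ Hc1); unfold Rsqr in *; nra|].
      exfalso. apply Hc1. auto.
  - intros i Hi HQ. rewrite bform_lincomb_l, <- (Heq i)
      by (lia || (unfold Q'; destruct (Nat.ltb_spec i r); [auto|lia])).
    apply fsum_ext; intros j Hj. unfold a. destruct (Nat.ltb_spec i r); [auto|lia].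
Qed.

(* An orthogonal family in [L] has at most as many positive vectors as an orthogonal
   basis of [L]: otherwise some positive combination of it is orthogonal to all positive
   basis vectors, hence has non-positive square. *)
Lemma npos_le_obasis L m b s u : subspace n L -> obasis n G L m b ->
  orthogonal_family n G s u -> (forall j, (j < s)%nat -> L (u j)) ->
  (npos n G s u <= npos n G m b)%nat.
Proof.
  intros HL [Hb Hob] Ho Hu. destruct (le_lt_dec (npos n G s u) (npos n G m b)) as [|Hlt]; auto.
  exfalso. rewrite (npos_count_true m b) in Hlt.
  destruct (exists_pos_comb_orth s u m b _ Ho Hlt) as [c [Hp Hz]].
  destruct (basis_span L m b (lincomb s c u) Hb) as [x Hx]; [now apply (subspace_lincomb n)|].
  rewrite Hx, bform_lincomb_diag in Hp by auto.
  enough (fsum m (fun i => x i * x i * B (b i) (b i)) <= 0) by lra.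
  apply fsum_nonpos. intros i Hi. destruct (Rlt_dec 0 (B (b i) (b i))) as [Hpi|]; [|nra].
  specialize (Hz i Hi (proj2 (posb_true _) Hpi)).
  rewrite Hx, bform_lincomb_orth_l in Hz by auto.
  apply Rmult_integral in Hz as [->|]; lra.
Qed.

Lemma obasis_npos_zero_nonpos L m b v : subspace n L -> obasis n G L m b ->
  npos n G m b = 0%nat -> L v -> B v v <= 0.
Proof.
  intros HL Hb H0 Lv. apply Rnot_lt_le; intro Hv.
  pose proof (npos_le_obasis L m b 1 (fun _ => v) HL Hb) as Hle.
  simpl in Hle. destruct Rlt_dec; [|lra].
  enough (1 <= 0)%nat by lia. rewrite <- H0 at 2. apply Hle; [|auto].
  intros i j Hi Hj; lia.
Qed.

Lemma npos_ext m b b' : (forall j, (j < m)%nat -> b j = b' j) -> npos n G m b = npos n G m b'.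
Proof.
  induction m; simpl; intros H; auto.
  rewrite IHm by (intros; apply H; lia). rewrite H by lia. reflexivity.
Qed.

Lemma nneg_ext m b b' : (forall j, (j < m)%nat -> b j = b' j) -> nneg n G m b = nneg n G m b'.
Proof.
  induction m; simpl; intros H; auto.
  rewrite IHm by (intros; apply H; lia). rewrite H by lia. reflexivity.
Qed.

Lemma npos_all m b : (forall j, (j < m)%nat -> 0 < B (b j) (b j)) -> npos n G m b = m.
Proof.
  induction m; simpl; intros H; auto. rewrite IHm by (intros; apply H; lia).
  destruct Rlt_dec as [|Hn]; [lia|]. exfalso. apply Hn, H; lia.
Qed.

Lemma nneg_all m b : (forall j, (j < m)%nat -> 0 < B (b j) (b j)) -> nneg n G m b = 0%nat.
Proof.
  induction m; simpl; intros H; auto. rewrite IHm by (intros; apply H; lia).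
  destruct Rlt_dec; [|lia]. pose proof (H m ltac:(lia)). lra.
Qed.

Lemma npos_exists m b : (1 <= npos n G m b)%nat -> exists j, (j < m)%nat /\ 0 < B (b j) (b j).
Proof.
  induction m; simpl; intros H; [lia|]. destruct Rlt_dec.
  - exists m; split; auto.
  - rewrite Nat.add_0_r in H. destruct (IHm H) as [j [Hj Hp]]. exists j; split; auto.
Qed.

Definition cat m (f g : nat -> Vec) : nat -> Vec :=
  fun j => if Nat.ltb j m then f j else g (j - m)%nat.

Lemma npos_cat m r f g : npos n G (m + r) (cat m f g) = (npos n G m f + npos n G r g)%nat.
Proof.
  induction r as [|r IH]; simpl.
  - rewrite !Nat.add_0_r. apply npos_ext. intros j Hj; unfold cat.
    destruct (Nat.ltb_spec j m); [auto|lia].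
  - rewrite Nat.add_succ_r; simpl. rewrite IH. unfold cat.
    destruct (Nat.ltb_spec (m + r) m); [lia|]. replace (m + r - m)%nat with r by lia. lia.
Qed.

Lemma nneg_cat m r f g : nneg n G (m + r) (cat m f g) = (nneg n G m f + nneg n G r g)%nat.
Proof.
  induction r as [|r IH]; simpl.
  - rewrite !Nat.add_0_r. apply nneg_ext. intros j Hj; unfold cat.
    destruct (Nat.ltb_spec j m); [auto|lia].
  - rewrite Nat.add_succ_r; simpl. rewrite IH. unfold cat.
    destruct (Nat.ltb_spec (m + r) m); [lia|]. replace (m + r - m)%nat with r by lia. lia.
Qed.

Lemma lincomb_cat m r c f g : lincomb (m + r) c (cat m f g) =
  fun i => lincomb m c f i + lincomb r (fun j => c (m + j)%nat) g i.
Proof.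
  apply functional_extensionality; intros i. unfold lincomb. rewrite fsum_app. f_equal.
  - apply fsum_ext; intros j Hj; unfold cat; destruct (Nat.ltb_spec j m); auto; lia.
  - apply fsum_ext; intros j Hj; unfold cat; destruct (Nat.ltb_spec (m + j) m); [lia|].
    do 3 f_equal; lia.
Qed.

Lemma orthogonal_family_cat m r f g :
  orthogonal_family n G m f -> orthogonal_family n G r g ->
  (forall i j, (i < m)%nat -> (j < r)%nat -> B (f i) (g j) = 0 /\ B (g j) (f i) = 0) ->
  orthogonal_family n G (m + r) (cat m f g).
Proof.
  intros Hf Hg Hfg i j Hi Hj Hne. unfold cat.
  destruct (Nat.ltb_spec i m), (Nat.ltb_spec j m);
    [apply Hf|apply Hfg|apply Hfg|apply Hg]; lia.
Qed.

Lemma bform_lincomb_pos s u c : orthogonal_family n G s u ->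
  (forall j, (j < s)%nat -> 0 < B (u j) (u j)) -> nonzero (lincomb s c u) ->
  B (lincomb s c u) (lincomb s c u) > 0.
Proof.
  intros Ho Hp [i Hi]. rewrite bform_lincomb_diag by exact Ho.
  destruct (classic (exists j, (j < s)%nat /\ c j <> 0)) as [[j [Hj Hc]]|Hno].
  - apply Rlt_gt, (fsum_pos s _ j Hj).
    + intros t Ht. pose proof (Hp t Ht). nra.
    + pose proof (Hp j Hj). pose proof (Rsqr_pos_lt _ Hc). unfold Rsqr in *. nra.
  - exfalso. apply Hi. unfold lincomb. apply fsum_zero. intros j Hj.
    replace (c j) with 0; [ring|]. apply NNPP; intro; apply Hno; exists j; auto.
Qed.

End Inertia.

Definition neg_form (G : nat -> nat -> R) := fun i j => - G i j.

Lemma bform_neg_form n G v w : bform n (neg_form G) v w = - bform n G v w.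
Proof.
  unfold bform, neg_form.
  replace (- fsum n _) with (-1 * fsum n (fun i => fsum n (fun j => G i j * v i * w j))) by ring.
  rewrite <- fsum_scal. apply fsum_ext; intros. rewrite <- fsum_scal. apply fsum_ext; intros. ring.
Qed.

Lemma nneg_le_obasis n G L m b s u : subspace n L -> obasis n G L m b ->
  orthogonal_family n G s u -> (forall j, (j < s)%nat -> L (u j)) ->
  (nneg n G s u <= nneg n G m b)%nat.
Proof.
  intros HL [Hb Hob] Ho Hu.
  assert (E : forall t f, nneg n G t f = npos n (neg_form G) t f).
  { induction t; intros f; simpl; auto. rewrite IHt, bform_neg_form.
    do 2 destruct Rlt_dec; auto; lra. }
  rewrite !E. apply (npos_le_obasis n (neg_form G) L); auto.
  - split; auto. intros i j Hi Hj Hne. rewrite bform_neg_form, Hob by auto. ring.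
  - intros i j Hi Hj Hne. rewrite bform_neg_form, Ho by auto. ring.
Qed.

(** * Connectedness *)

Lemma open_bform_pos n G y : open_set n (fun x => bform n G y x > 0).
Proof.
  intros v Hv. set (al := bform n G y v) in *.
  set (S := fsum n (fun i => fsum n (fun j => Rabs (G i j * y i)))).
  assert (HS0 : 0 <= S) by (apply fsum_nonneg; intros; apply fsum_nonneg; intros; apply Rabs_pos).
  assert (Heps : 0 < al / (S + 1)) by (apply Rdiv_lt_0_compat; lra).
  exists (al / (S + 1)). split; [lra|]. intros w Hw Hd.
  assert (Hb : Rabs (bform n G y (fun i => w i - v i)) <= S * (al / (S + 1))).
  { unfold bform. eapply Rle_trans; [apply fsum_abs|]. unfold S.
    rewrite Rmult_comm, <- fsum_scal. apply fsum_le; intros i Hi.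
    eapply Rle_trans; [apply fsum_abs|]. rewrite <- fsum_scal. apply fsum_le; intros j Hj.
    rewrite Rabs_mult, (Rmult_comm (al / (S + 1))).
    apply Rmult_le_compat_l; [apply Rabs_pos|left; apply Hd; auto]. }
  replace (S * (al / (S + 1))) with (al - al / (S + 1)) in Hb by (field; lra).
  rewrite bform_subr in Hb. pose proof (Rle_abs (- (bform n G y w - al))).
  rewrite Rabs_Ropp in *. fold al in Hb. lra.
Qed.

Definition segment (c x : Vec) (t : R) : Vec := fun i => t * c i + (1 - t) * x i.

Lemma segment_nbhd n U c x s : open_set n U -> vec n c -> vec n x -> U (segment c x s) ->
  exists del, del > 0 /\ forall t, Rabs (t - s) < del -> U (segment c x t).
Proof.
  intros OU Hc Hx Us. destruct (OU _ Us) as [eps [He Hw]].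
  set (K := fsum n (fun i => Rabs (c i - x i)) + 1).
  assert (HK : 0 < K)
    by (pose proof (fsum_nonneg n (fun i => Rabs (c i - x i)) ltac:(intros; apply Rabs_pos));
        unfold K; lra).
  exists (eps / K). split; [apply Rlt_gt, Rdiv_lt_0_compat; lra|].
  intros t Ht. apply Hw.
  { intros i Hi. unfold segment. rewrite Hc, Hx by auto. ring. }
  intros i Hi. unfold segment.
  replace (t * c i + (1 - t) * x i - (s * c i + (1 - s) * x i)) with ((t - s) * (c i - x i))
    by ring.
  rewrite Rabs_mult.
  pose proof (fsum_term_le n (fun i => Rabs (c i - x i)) i Hi ltac:(intros; apply Rabs_pos)).
  apply Rle_lt_trans with (Rabs (t - s) * K).
  - apply Rmult_le_compat_l; [apply Rabs_pos|]. unfold K. simpl in *. lra.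
  - apply Rmult_lt_reg_r with (/ K); [apply Rinv_0_lt_compat; lra|].
    replace (Rabs (t - s) * K * / K) with (Rabs (t - s)) by (field; lra). exact Ht.
Qed.

Section StarShaped.
Variables (n : nat) (D : Vec -> Prop) (c : Vec).
Hypothesis HDv : forall x, D x -> vec n x.
Hypothesis Hc : D c.
Hypothesis Hstar : forall x t, D x -> 0 <= t <= 1 -> D (segment c x t).

(* Let [s] be the supremum of the [t] such that the segment from [x] to [segment c x t]
   stays in [U2]; openness of [U1] and [U2] forbids [segment c x s] to lie in either. *)
Lemma star_shaped_not_separated U1 U2 x : open_set n U1 -> open_set n U2 ->
  (forall a, D a -> U1 a \/ U2 a) -> (forall a, D a -> U1 a -> U2 a -> False) ->
  U1 c -> D x -> U2 x -> False.
Proof.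
  intros O1 O2 Hcov Hdis Hc1 Dx Hx2.
  assert (p0 : segment c x 0 = x) by (apply functional_extensionality; intros; unfold segment; ring).
  assert (p1 : segment c x 1 = c) by (apply functional_extensionality; intros; unfold segment; ring).
  set (E := fun t => 0 <= t <= 1 /\ forall t', 0 <= t' <= t -> U2 (segment c x t')).
  assert (E0 : E 0).
  { split; [lra|]. intros t' Ht'. replace t' with 0 by lra. now rewrite p0. }
  destruct (completeness E) as [s [Hub Hlub]]; [exists 1; intros t [Ht _]; lra|now exists 0|].
  assert (Hs0 : 0 <= s) by (now apply Hub).
  assert (Hs1 : s <= 1) by (apply Hlub; intros t [Ht _]; lra).
  assert (Hbelow : forall t', 0 <= t' < s -> U2 (segment c x t')).
  { intros t' Ht'. apply NNPP; intro Hn.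
    enough (s <= t') by lra. apply Hlub. intros t [Ht Ht2].
    destruct (Rle_lt_dec t t'); auto. exfalso. apply Hn, Ht2; lra. }
  destruct (Hcov (segment c x s) (Hstar x s Dx ltac:(lra))) as [Hs|Hs].
  - destruct (Req_dec s 0) as [->|Hsn]; [apply (Hdis x Dx); auto; now rewrite <- p0|].
    destruct (segment_nbhd n U1 c x s O1 (HDv c Hc) (HDv x Dx) Hs) as [del [Hd Hdel]].
    set (t' := Rmax 0 (s - del / 2)).
    assert (Ht' : 0 <= t' < s) by (unfold t'; split; [apply Rmax_l|]; apply Rmax_lub_lt; lra).
    apply (Hdis (segment c x t')); [apply Hstar; auto; lra| |apply Hbelow; auto].
    apply Hdel. unfold t'.
    destruct (Rle_dec 0 (s - del / 2)); [rewrite Rmax_right by lra|rewrite Rmax_left by lra];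
      rewrite Rabs_left1 by lra; lra.
  - destruct (Req_dec s 1) as [->|Hsn]; [apply (Hdis c Hc); auto; now rewrite <- p1|].
    destruct (segment_nbhd n U2 c x s O2 (HDv c Hc) (HDv x Dx) Hs) as [del [Hd Hdel]].
    set (t1 := Rmin 1 (s + del / 2)).
    assert (Ht1 : s < t1 <= 1 /\ t1 <= s + del / 2)
      by (unfold t1; split; [split; [apply Rmin_glb_lt; lra|apply Rmin_l]|apply Rmin_r]).
    enough (E t1) by (pose proof (Hub t1 H); lra).
    split; [lra|]. intros t' Ht'. destruct (Rlt_le_dec t' s); [apply Hbelow; lra|].
    apply Hdel. rewrite Rabs_right by lra. lra.
Qed.

Lemma star_shaped_connected : connected n D.
Proof.
  intros [U1 [U2 [O1 [O2 [Hcov [[a1 [Da1 Ha1]] [[a2 [Da2 Ha2]] Hdis]]]]]]].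
  destruct (Hcov c Hc) as [Hc1|Hc2].
  - apply (star_shaped_not_separated U1 U2 a2); auto.
  - apply (star_shaped_not_separated U2 U1 a1); auto.
    + intros a Da; destruct (Hcov a Da); auto.
    + intros a Da H1 H2; apply (Hdis a); auto.
Qed.

End StarShaped.

Definition nondegenerate_on n G (M : Vec -> Prop) : Prop :=
  forall x, M x -> (forall y, M y -> bform n G x y = 0) -> forall i, x i = 0.

Definition has_pos_vector n G (L : Vec -> Prop) : Prop :=
  exists w, L w /\ bform n G w w > 0.

Lemma qplus_pos_iff n G L : symmetric n G -> subspace n L ->
  (exists p, qplus n G L p /\ (1 <= p)%nat) <-> has_pos_vector n G L.
Proof.
  intros HS HL. split.
  - intros [p [[m [f [Hf <-]]] H1]]. destruct (npos_exists n G m f H1) as [j [Hj Hpj]].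
    exists (f j). split; auto. apply (proj1 (proj1 Hf)); auto.
  - intros [w [Lw Hw]]. destruct (obasis_exists n G HS L HL) as [m [f Hf]].
    exists (npos n G m f). split; [exists m, f; auto|].
    destruct (Nat.eq_dec (npos n G m f) 0) as [H0|]; [|lia].
    pose proof (obasis_npos_zero_nonpos n G L m f w HL Hf H0 Lw). lra.
Qed.

Lemma subspace_comb n M v w s t : subspace n M -> M v -> M w -> M (fun i => s * v i + t * w i).
Proof. intros [_ [_ [Ha Hs]]] Hv Hw. auto. Qed.

(** * Lorentzian spaces *)

Section Lorentzian.
Variables (n : nat) (G : nat -> nat -> R) (M : Vec -> Prop).
Notation B := (bform n G).
Hypothesis HS : symmetric n G.
Hypothesis HM : subspace n M.
Hypothesis HND : nondegenerate_on n G M.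
Variables (d : nat) (b : nat -> Vec).
Hypothesis Hb : obasis n G M d b.
Hypothesis Hb1 : npos n G d b = 1%nat.

Lemma lorentz_pos_exists : has_pos_vector n G M.
Proof.
  destruct (npos_exists n G d b ltac:(lia)) as [j [Hj Hp]].
  exists (b j). split; [apply (proj1 (proj1 Hb)); auto|lra].
Qed.

Lemma lorentz_orth_pos_not_pos w v : M w -> B w w > 0 -> M v -> B v w = 0 -> ~ B v v > 0.
Proof.
  intros Mw Hw Mv Hvw Hv.
  set (fam := ext 1 (fun _ => w) v).
  assert (Ho : orthogonal_family n G 2 fam).
  { apply orthogonal_family_ext; [intros i j Hi Hj; lia|].
    intros j Hj. rewrite (bform_sym n G w v HS). auto. }
  pose proof (npos_le_obasis n G M d b 2 fam HM Hb Ho) as Hle. rewrite Hb1 in Hle.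
  unfold fam, ext in Hle. simpl in Hle.
  destruct Rlt_dec; [|lra]. destruct Rlt_dec; [|lra].
  enough (2 <= 1)%nat by lia. apply Hle.
  intros j Hj. destruct (Nat.ltb_spec j 1); auto.
Qed.

(* An isotropic [u] orthogonal to [w] is paired nontrivially with some [y] orthogonal to
   [w] (nondegeneracy); then [u + t y] is positive for small [t] of the right sign. *)
Lemma lorentz_orth_pos_neg w u : M w -> B w w > 0 -> M u -> B u w = 0 -> nonzero u ->
  B u u < 0.
Proof.
  intros Mw Hw Mu Huw Hnz.
  destruct (Rlt_le_dec (B u u) 0) as [|[Hgt|Heq]]; auto;
    exfalso; [now apply (lorentz_orth_pos_not_pos w u)|].
  assert (Hy : exists y, M y /\ B u y <> 0).
  { apply NNPP; intro Hn. destruct Hnz as [i Hi]. apply Hi. clear Hi. revert i. apply HND; auto.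
    intros y My. apply NNPP; intro; apply Hn; exists y; auto. }
  destruct Hy as [y [My Hy]].
  set (y' := fun i => 1 * y i + (- (B y w / B w w)) * w i).
  assert (My' : M y') by (unfold y'; apply (subspace_comb n); auto).
  assert (Huy' : B u y' = B u y) by (unfold y'; rewrite bform_addr, !bform_scalr, Huw; ring).
  assert (Hy'w : B y' w = 0) by (unfold y'; rewrite bform_addl, !bform_scall; field; lra).
  set (a := B u y') in *. set (c := B y' y').
  set (t := a / (Rabs c + 1)).
  assert (Hc : 0 < Rabs c + 1) by (pose proof (Rabs_pos c); lra).
  assert (Ht : t * (Rabs c + 1) = a) by (unfold t; field; lra).
  assert (Ht0 : 0 < t * t) by (assert (t <> 0) by (intro E; rewrite E in Ht; lra);
    pose proof (Rsqr_pos_lt t H); unfold Rsqr in *; lra).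
  apply (lorentz_orth_pos_not_pos w (fun i => 1 * u i + t * y' i)).
  - auto.
  - auto.
  - apply (subspace_comb n); auto.
  - rewrite bform_addl, !bform_scall, Huw, Hy'w. ring.
  - rewrite bform_addl, !bform_addr, !bform_scall, !bform_scalr, (bform_sym n G y' u) by auto.
    fold a c. rewrite <- Heq, <- Ht.
    pose proof (Rle_abs (- c)). rewrite Rabs_Ropp in *.
    assert (0 < t * t * (2 * (Rabs c + 1) + c)) by (apply Rmult_lt_0_compat; lra).
    nra.
Qed.

Lemma lorentz_causal_not_orth w x : M w -> B w w > 0 -> causal_cone n G M x -> B w x <> 0.
Proof.
  intros Mw Hw [Mx [Hxx Hnx]] E.
  pose proof (lorentz_orth_pos_neg w x Mw Hw Mx ltac:(rewrite bform_sym; auto) Hnx). lra.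
Qed.

(* The half cone is star-shaped around [e]. *)
Lemma lorentz_half_cone_connected e : M e -> B e e > 0 ->
  connected n (fun x => causal_cone n G M x /\ B e x > 0).
Proof.
  intros Me He. apply (star_shaped_connected n _ e).
  - intros x [[Mx _] _]. now apply (proj1 HM).
  - split; [split; [auto|split]|]; [lra|apply (nonzero_of_bform_neq0 n G); lra|lra].
  - intros x t [[Mx [Hxx Hnx]] Hex] Ht.
    assert (Exy : B (segment e x t) (segment e x t) =
                  t * t * B e e + 2 * t * (1 - t) * B e x + (1 - t) * (1 - t) * B x x).
    { unfold segment. rewrite bform_addl, !bform_addr, !bform_scall, !bform_scalr.
      rewrite (bform_sym n G x e) by auto. ring. }
    assert (Hey : B e (segment e x t) = t * B e e + (1 - t) * B e x)
      by (unfold segment; rewrite bform_addr, !bform_scalr; ring).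
    assert (0 <= t * (1 - t)) by nra.
    assert (0 <= (1 - t) * (1 - t)) by nra.
    split; [split; [unfold segment; apply (subspace_comb n); auto|split]|].
    + rewrite Exy. nra.
    + destruct (Req_dec t 0) as [->|Ht0].
      * replace (segment e x 0) with x; auto.
        apply functional_extensionality; intros; unfold segment; ring.
      * apply (nonzero_of_bform_neq0 n G). rewrite Exy. pose proof (Rsqr_pos_lt t Ht0). unfold Rsqr in *. nra.
    + rewrite Hey. destruct (Req_dec t 0) as [->|Ht0]; nra.
Qed.

Lemma lorentz_component_sign C w : connected n C -> (forall u, C u -> causal_cone n G M u) ->
  M w -> B w w > 0 -> (forall u, C u -> B w u > 0) \/ (forall u, C u -> B w u < 0).
Proof.
  intros Hc HC Mw Hw.
  assert (Hnz : forall u, C u -> B w u <> 0)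
    by (intros u Cu; apply lorentz_causal_not_orth; auto).
  destruct (classic (exists u, C u /\ B w u < 0)) as [[u2 [Cu2 H2]]|Hno2].
  - right. intros u Cu. destruct (Rtotal_order (B w u) 0) as [|[|Hpos]];
      [auto|exfalso; apply (Hnz u); auto|exfalso].
    apply Hc. exists (fun x => B w x > 0), (fun x => B (fun i => -1 * w i) x > 0).
    split; [apply open_bform_pos|]. split; [apply open_bform_pos|].
    repeat split; [| |exists u2; rewrite bform_scall; split; [auto|lra]|]; [|now exists u|].
    + intros x Cx. rewrite bform_scall. pose proof (Hnz x Cx).
      destruct (Rtotal_order (B w x) 0) as [|[|]]; [right; lra|contradiction|left; lra].
    + intros x Cx H1 H2'. rewrite bform_scall in H2'. lra.
  - left. intros u Cu. destruct (Rtotal_order (B w u) 0) as [|[|]];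
      [exfalso; apply Hno2; eauto|exfalso; apply (Hnz u); auto|lra].
Qed.

Lemma lorentz_component_contains_half C : connected_component n C (causal_cone n G M) ->
  exists e, M e /\ B e e > 0 /\ forall x, causal_cone n G M x -> B e x > 0 -> C x.
Proof.
  intros [HCA [[x0 Cx0] [Hconn Hmax]]].
  destruct lorentz_pos_exists as [e1 [Me1 He1]].
  assert (Hor : exists e, M e /\ B e e > 0 /\ B e x0 > 0).
  { destruct (Rtotal_order (B e1 x0) 0) as [Hl|[Hq|Hg]]; [|exfalso|eauto].
    - exists (fun i => -1 * e1 i). rewrite !bform_scall, bform_scalr.
      split; [apply (proj2 (proj2 (proj2 HM))); auto|lra].
    - apply (lorentz_causal_not_orth e1 x0); auto. }
  destruct Hor as [e [Me [He Hx0]]]. exists e. split; [auto|split; [auto|]].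
  intros x Cx Hx. apply (Hmax (fun x => causal_cone n G M x /\ B e x > 0)); auto.
  - intros y [Hy _]; auto.
  - apply lorentz_half_cone_connected; auto.
  - exists x0. repeat split; auto; apply HCA; auto.
Qed.

(* If [W] has no positive vector, either [W] contains an isotropic vector (then orthogonal
   to all of [W]) or [W] is negative definite and the projection of a positive [e] onto
   the orthogonal of [W] is positive. *)
Lemma lorentz_causal_orth W : subspace n W -> (forall x, W x -> M x) ->
  ~ has_pos_vector n G W -> exists u, causal_cone n G M u /\ forall x, W x -> B u x = 0.
Proof.
  intros HW WM HnP. destruct lorentz_pos_exists as [e [Me He]].
  destruct (obasis_exists n G HS W HW) as [s [w [Hw Hwo]]].
  assert (Ww : forall i, (i < s)%nat -> W (w i)) by apply (proj1 Hw).
  destruct (classic (exists i, (i < s)%nat /\ B (w i) (w i) = 0)) as [[i [Hi Hi0]]|Hno].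
  { exists (w i). split; [split; [apply WM, Ww; auto|split; [lra|]]|].
    - apply (lin_indep_nonzero s); auto. apply (basis_lin_indep W); auto.
    - intros x Wx. destruct (basis_span W s w x Hw Wx) as [y ->].
      rewrite bform_lincomb_orth_r, Hi0 by auto. ring. }
  assert (Hneg : forall i, (i < s)%nat -> B (w i) (w i) < 0).
  { intros i Hi. destruct (Rtotal_order (B (w i) (w i)) 0) as [|[|]]; auto; exfalso.
    - apply Hno; eauto.
    - apply HnP. exists (w i); auto. }
  set (al := fun i => B e (w i) / B (w i) (w i)).
  assert (Wp : W (lincomb s al w)) by (apply (subspace_lincomb n); auto).
  set (v := fun t => 1 * e t + (-1) * lincomb s al w t).
  assert (Hperp : forall x, W x -> B v x = 0).
  { intros x Wx. destruct (basis_span W s w x Hw Wx) as [y ->]. rewrite bform_lincomb_r.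
    apply fsum_zero. intros i Hi. unfold v.
    rewrite bform_addl, !bform_scall, (bform_lincomb_orth_l n G s al w i Hwo Hi).
    unfold al. field_simplify; [ring|]. pose proof (Hneg i Hi). lra. }
  assert (Hvv : B v v >= B e e).
  { assert (E1 : B v v = B e v).
    { change (B (fun t => 1 * e t + (-1) * lincomb s al w t) v = B e v).
      rewrite bform_addl, !bform_scall, (bform_sym n G (lincomb s al w) v), Hperp by auto. ring. }
    rewrite E1. unfold v. rewrite bform_addr, !bform_scalr, bform_lincomb_r.
    enough (fsum s (fun j => al j * B e (w j)) <= 0) by lra.
    apply fsum_nonpos. intros i Hi. unfold al. pose proof (Hneg i Hi).
    replace (B e (w i) / B (w i) (w i) * B e (w i))
      with (- (B e (w i) * B e (w i)) * / (- B (w i) (w i))) by (field; lra).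
    assert (0 < / (- B (w i) (w i))) by (apply Rinv_0_lt_compat; lra). nra. }
  exists v. split; [split; [apply (subspace_comb n); auto|split; [lra|]]|auto].
  apply (nonzero_of_bform_neq0 n G). lra.
Qed.

End Lorentzian.

(** * The orthogonal complement of a positive plane *)

Lemma pos_plane_obasis n G H r : symmetric n G -> pos_plane n G H r ->
  exists h, obasis n G H r h /\ forall j, (j < r)%nat -> 0 < bform n G (h j) (h j).
Proof.
  intros HS [HH [[hb Hhb] Hpd]]. destruct (obasis_exists n G HS H HH) as [dh [h [Hh Hoh]]].
  assert (Hp : forall j, (j < dh)%nat -> 0 < bform n G (h j) (h j)).
  { intros j Hj. apply Hpd; [apply (proj1 Hh); auto|].
    apply (lin_indep_nonzero dh); auto. apply (basis_lin_indep H); auto. }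
  assert (E : dh = r).
  { apply Nat.le_antisymm; [apply (lin_indep_le dh r h hb)|apply (lin_indep_le r dh hb h)].
    - intros j Hj. apply (basis_span H); auto. apply (proj1 Hh); auto.
    - apply (basis_lin_indep H); auto.
    - intros j Hj. apply (basis_span H); auto. apply (proj1 Hhb); auto.
    - apply (basis_lin_indep H); auto. }
  subst. exists h. split; [split|]; auto.
Qed.

Section PositivePlane.
Variables (n : nat) (G : nat -> nat -> R) (H : Vec -> Prop) (r : nat) (h : nat -> Vec).
Notation B := (bform n G).
Notation M := (orth n G H).
Hypothesis HS : symmetric n G.
Hypothesis HH : subspace n H.
Hypothesis Hh : obasis n G H r h.
Hypothesis Hhp : forall j, (j < r)%nat -> 0 < B (h j) (h j).

Definition proj_plane (v : Vec) : Vec := lincomb r (fun i => B v (h i) / B (h i) (h i)) h.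

Lemma proj_plane_in v : H (proj_plane v).
Proof. unfold proj_plane. apply (subspace_lincomb n); auto. apply (proj1 (proj1 Hh)). Qed.

Lemma orth_plane_bform a u : H a -> M u -> B a u = 0 /\ B u a = 0.
Proof. intros Ha [Hu Hu']. rewrite (bform_sym n G a u HS). auto. Qed.

Lemma orth_plane_of_basis v : vec n v -> (forall i, (i < r)%nat -> B v (h i) = 0) -> M v.
Proof.
  intros Hv Ho. split; auto. intros x Hx. destruct (basis_span H r h x (proj1 Hh) Hx) as [y ->].
  rewrite bform_lincomb_r. apply fsum_zero. intros i Hi. rewrite Ho by auto. ring.
Qed.

Lemma sub_proj_plane_orth v : vec n v -> M (fun i => v i - proj_plane v i).
Proof.
  intros Hv. apply orth_plane_of_basis.
  - intros i Hi. rewrite Hv, (proj1 HH _ (proj_plane_in v)) by auto. ring.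
  - intros i Hi. rewrite bform_subl. unfold proj_plane.
    rewrite (bform_lincomb_orth_l n G r _ h i (proj2 Hh) Hi).
    field. pose proof (Hhp i Hi). lra.
Qed.

Lemma bform_orth_plane_split u v : M u -> vec n v ->
  B u v = B u (fun i => v i - proj_plane v i).
Proof.
  intros Mu Hv. rewrite bform_subr, (proj2 (orth_plane_bform _ u (proj_plane_in v) Mu)). ring.
Qed.

Lemma orth_plane_nondegenerate : nondegenerate n G -> nondegenerate_on n G M.
Proof.
  intros HN x Mx Hx. enough (Hnz : ~ nonzero x)
    by (intros i; apply NNPP; intro Hi; apply Hnz; now exists i).
  apply HN; [apply (proj1 Mx)|]. intros w Hw.
  rewrite bform_orth_plane_split by auto. apply Hx, sub_proj_plane_orth; auto.
Qed.

Lemma orth_plane_obasis_nonisotropic d b : nondegenerate n G -> obasis n G M d b ->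
  forall j, (j < d)%nat -> B (b j) (b j) <> 0.
Proof.
  intros HN Hb j Hj E.
  destruct (lin_indep_nonzero d b j (basis_lin_indep _ _ _ (proj1 Hb)) Hj) as [i0 Hi0].
  apply Hi0. clear Hi0. revert i0. apply orth_plane_nondegenerate; auto.
  - apply (proj1 (proj1 Hb)); auto.
  - intros y My. destruct (basis_span M d b y (proj1 Hb) My) as [x ->].
    rewrite (bform_lincomb_orth_r n G d x b j (proj2 Hb) Hj), E. ring.
Qed.

Lemma obasis_whole_cat d b : nondegenerate n G -> obasis n G M d b ->
  obasis n G (whole n) (r + d) (cat r h b).
Proof.
  intros HN Hb. split.
  2:{ apply orthogonal_family_cat; [exact (proj2 Hh)|exact (proj2 Hb)|].
      intros i j Hi Hj. apply orth_plane_bform; [apply (proj1 (proj1 Hh))|apply (proj1 (proj1 Hb))];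
      auto. }
  split; [|split].
  - intros j Hj. unfold cat, whole. destruct (Nat.ltb_spec j r).
    + apply (proj1 HH), (proj1 (proj1 Hh)); auto.
    + apply (proj1 (proj1 Hb)); lia.
  - intros v Hv. destruct (basis_span M d b _ (proj1 Hb) (sub_proj_plane_orth v Hv)) as [y Hy].
    exists (fun j => if Nat.ltb j r then B v (h j) / B (h j) (h j) else y (j - r)%nat).
    intros i. rewrite lincomb_cat.
    rewrite (lincomb_ext r _ (fun i => B v (h i) / B (h i) (h i)) h h)
      by (intros j Hj; destruct (Nat.ltb_spec j r); split; auto; lia).
    rewrite (lincomb_ext d (fun j => if Nat.ltb (r + j) r then _ else _) y b b)
      by (intros j Hj; destruct (Nat.ltb_spec (r + j) r); [lia|]; split; auto; f_equal; lia).
    rewrite <- Hy. unfold proj_plane. ring.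
  - apply (orthogonal_lin_indep n G).
    + apply orthogonal_family_cat; [exact (proj2 Hh)|exact (proj2 Hb)|].
      intros i j Hi Hj. apply orth_plane_bform; [apply (proj1 (proj1 Hh))|apply (proj1 (proj1 Hb))];
        auto.
    + intros j Hj. unfold cat. destruct (Nat.ltb_spec j r).
      * pose proof (Hhp j ltac:(auto)). lra.
      * apply (orth_plane_obasis_nonisotropic d); auto. lia.
Qed.

(* Sylvester: the inertia of [R^n] splits as that of [H] (all positive) plus that of [M]. *)
Lemma orth_plane_signature k l me e : nondegenerate n G ->
  obasis n G (whole n) me e -> npos n G me e = k -> nneg n G me e = l ->
  exists d b, obasis n G M d b /\ npos n G d b = (k - r)%nat /\ nneg n G d b = l /\
    forall j, (j < d)%nat -> B (b j) (b j) <> 0.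
Proof.
  intros HN He Hpe Hne. destruct (obasis_exists n G HS M (subspace_orth n G H)) as [d [b Hb]].
  pose proof (obasis_whole_cat d b HN Hb) as HF.
  assert (Hp : npos n G (r + d) (cat r h b) = (r + npos n G d b)%nat)
    by (rewrite npos_cat, npos_all; auto).
  assert (Hq : nneg n G (r + d) (cat r h b) = nneg n G d b)
    by (rewrite nneg_cat, nneg_all; auto).
  pose proof (proj1 (proj1 HF)) as HFw. pose proof (proj1 (proj1 He)) as Hew.
  pose proof (npos_le_obasis n G _ _ _ _ _ (subspace_whole n) He (proj2 HF) HFw).
  pose proof (npos_le_obasis n G _ _ _ _ _ (subspace_whole n) HF (proj2 He) Hew).
  pose proof (nneg_le_obasis n G _ _ _ _ _ (subspace_whole n) He (proj2 HF) HFw).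
  pose proof (nneg_le_obasis n G _ _ _ _ _ (subspace_whole n) HF (proj2 He) Hew).
  exists d, b. split; [exact Hb|split; [lia|split; [lia|]]].
  exact (orth_plane_obasis_nonisotropic d b HN Hb).
Qed.

End PositivePlane.

Lemma causal_cone_scal n G M t u : subspace n M -> t <> 0 -> causal_cone n G M u ->
  causal_cone n G M (fun i => t * u i).
Proof.
  intros HM Ht [Mu [Huu [i Hi]]]. split; [apply (proj2 (proj2 (proj2 HM))); auto|split].
  - rewrite bform_scall, bform_scalr. pose proof (Rsqr_pos_lt t Ht). unfold Rsqr in *. nra.
  - exists i. intro E. apply Rmult_integral in E as [|]; auto.
Qed.

Lemma pos_on_component_no_orth n G Z C : symmetric n G ->
  (exists z, Z z /\ forall u, C u -> bform n G z u > 0) -> ~ exists u, orth n G Z u /\ C u.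
Proof.
  intros HS [z [Zz Hz]] [u [[_ Hu] Cu]]. pose proof (Hz u Cu) as Hp.
  rewrite bform_sym, Hu in Hp by auto. lra.
Qed.

(** * Extending a positive plane *)

Section Extension.
Variables (n : nat) (G : nat -> nat -> R) (H Z : Vec -> Prop) (r : nat) (h : nat -> Vec).
Notation B := (bform n G).
Notation M := (orth n G H).
Notation W := (sinter (ssum H Z) M).
Hypothesis HS : symmetric n G.
Hypothesis HH : subspace n H.
Hypothesis HZ : subspace n Z.
Hypothesis Hh : obasis n G H r h.
Hypothesis Hhp : forall j, (j < r)%nat -> 0 < B (h j) (h j).

Lemma subspace_sinter_sum_orth : subspace n W.
Proof. apply subspace_sinter; [apply subspace_ssum; auto|apply subspace_orth]. Qed.

Lemma ext_plane_pos_family w : M w -> B w w > 0 ->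
  orthogonal_family n G (S r) (ext r h w) /\
  forall j, (j < S r)%nat -> 0 < B (ext r h w j) (ext r h w j).
Proof.
  intros Mw Hw. split.
  - apply orthogonal_family_ext; [exact (proj2 Hh)|]. intros j Hj.
    apply (orth_plane_bform n G H HS); auto. apply (proj1 (proj1 Hh)); auto.
  - intros j Hj. unfold ext. destruct (Nat.ltb_spec j r); auto.
Qed.

Lemma ext_plane_in (L : Vec -> Prop) w : (forall a, H a -> L a) -> L w ->
  forall j, (j < S r)%nat -> L (ext r h w j).
Proof.
  intros HL Lw j Hj. unfold ext. destruct (Nat.ltb_spec j r); auto.
  apply HL, (proj1 (proj1 Hh)); auto.
Qed.

Lemma ssum_l L a : subspace n L -> H a -> ssum H L a.
Proof. intros HL Ha. exists a, (fun _ => 0). repeat split; auto; [apply HL|intros; ring]. Qed.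

(* Take a positive combination of the family orthogonal to the [r] vectors [h]. *)
Lemma pos_of_orth_family_sum s u : orthogonal_family n G s u ->
  (forall j, (j < s)%nat -> ssum H Z (u j)) -> (r < npos n G s u)%nat -> has_pos_vector n G W.
Proof.
  intros Ho Hu Hr.
  destruct (exists_pos_comb_orth n G s u r h (fun _ => true) Ho) as [c [Hp Hz]];
    [rewrite count_true_const; lia|].
  exists (lincomb s c u). split; [split|auto].
  - apply (subspace_lincomb n); auto. apply subspace_ssum; auto.
  - apply (orth_plane_of_basis n G H r h Hh); [|intros i Hi; apply Hz; auto].
    apply (vec_lincomb n). intros j Hj. apply (proj1 (subspace_ssum n H Z HH HZ)); auto.
Qed.

(* An orthogonal basis of the positive [S r]-plane [H + R z] has [S r] positive vectors. *)
Lemma extendable_pos : extendable n G (S r) Z H -> has_pos_vector n G W.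
Proof.
  intros [z [Zz [HP [[pb Hpb] Hpd]]]].
  destruct (obasis_exists n G HS _ HP) as [s [q Hq]].
  assert (Hqp : forall j, (j < s)%nat -> 0 < B (q j) (q j)).
  { intros j Hj. apply Hpd; [apply (proj1 (proj1 Hq)); auto|].
    apply (lin_indep_nonzero s); auto. apply (basis_lin_indep _ _ _ (proj1 Hq)). }
  assert (Hks : (S r <= s)%nat).
  { apply (lin_indep_le (S r) s pb q); [|apply (basis_lin_indep _ _ _ Hpb)].
    intros j Hj. apply (basis_span (ssum H (line z)) s q); [exact (proj1 Hq)|apply (proj1 Hpb); auto]. }
  apply (pos_of_orth_family_sum s q (proj2 Hq)); [|rewrite npos_all; auto].
  intros j Hj. destruct (proj1 (proj1 Hq) j Hj) as [a [v [Ha [[t Ht] E]]]].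
  exists a, (fun i => t * z i). repeat split; auto; [apply (proj2 (proj2 (proj2 HZ))); auto|].
  intros i; rewrite E, Ht; auto.
Qed.

Lemma pos_extendable : has_pos_vector n G W -> extendable n G (S r) Z H.
Proof.
  intros [w [[[a [z [Ha [Zz E]]]] Mw] Hw]]. exists z. split; auto.
  destruct (ext_plane_pos_family w Mw Hw) as [Ho Hp].
  assert (Hin : forall j, (j < S r)%nat -> ssum H (line z) (ext r h w j)).
  { apply ext_plane_in; [intros; apply ssum_l; auto; apply subspace_line, (proj1 HZ); auto|].
    exists a, z. repeat split; auto. exists 1; intros; ring. }
  assert (Hbasis : basis (ssum H (line z)) (S r) (ext r h w)).
  { split; [auto|split].
    - intros v [a' [bz [Ha' [[t Ht] Ev]]]].
      assert (Hx : H (fun i => 1 * a' i + (- t) * a i)) by (apply (subspace_comb n); auto).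
      destruct (basis_span H r h _ (proj1 Hh) Hx) as [y Hy].
      exists (fun j => if Nat.ltb j r then y j else t). intros i.
      rewrite lincomb_ext_S, Nat.ltb_irrefl,
        (lincomb_ext r _ y h h) by (intros j Hj; destruct (Nat.ltb_spec j r); auto; lia).
      rewrite <- Hy, Ev, Ht, E. ring.
    - apply (orthogonal_lin_indep n G); auto. intros j Hj. pose proof (Hp j Hj). lra. }
  split; [apply subspace_ssum, subspace_line; auto; apply (proj1 HZ); auto|].
  split; [exists (ext r h w); auto|].
  intros v Pv Hnz. destruct (basis_span _ _ _ v Hbasis Pv) as [c ->].
  apply bform_lincomb_pos; auto.
Qed.

Section Signature.
Variables (me : nat) (e : nat -> Vec).
Hypothesis He : obasis n G (whole n) me e.
Hypothesis Hpe : npos n G me e = S r.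

Lemma qplus_sum_iff_pos : qplus n G (ssum H Z) (S r) <-> has_pos_vector n G W.
Proof.
  assert (HS' : subspace n (ssum H Z)) by (apply subspace_ssum; auto).
  split.
  - intros [m [f [Hf Hp]]]. apply (pos_of_orth_family_sum m f (proj2 Hf)); [|lia].
    apply (proj1 (proj1 Hf)).
  - intros [w [[Sw Mw] Hw]]. destruct (obasis_exists n G HS _ HS') as [m [f Hf]].
    exists m, f. split; auto. apply Nat.le_antisymm.
    + rewrite <- Hpe. apply (npos_le_obasis n G (whole n) me e m f (subspace_whole n) He (proj2 Hf)).
      intros j Hj. apply (proj1 HS'), (proj1 (proj1 Hf)); auto.
    + destruct (ext_plane_pos_family w Mw Hw) as [Ho Hp].
      rewrite <- (npos_all n G (S r) (ext r h w) Hp).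
      apply (npos_le_obasis n G _ m f _ _ HS' Hf Ho).
      apply ext_plane_in; auto. intros; apply ssum_l; auto.
Qed.

End Signature.

Section Lorentz.
Hypothesis HND : nondegenerate_on n G M.
Variables (d : nat) (b : nat -> Vec).
Hypothesis Hb : obasis n G M d b.
Hypothesis Hb1 : npos n G d b = 1%nat.

(* [z] and [w = a + z] (with [a] in [H]) pair identically with [M]; a positive [w] of [M]
   has constant sign on the connected set [C]. *)
Lemma exists_pos_on_component C : connected n C -> (forall u, C u -> causal_cone n G M u) ->
  has_pos_vector n G W -> exists z, Z z /\ forall u, C u -> B z u > 0.
Proof.
  intros Hc HC [w [[[a [z [Ha [Zz E]]]] Mw] Hw]].
  assert (Hzu : forall u, C u -> B z u = B w u).
  { intros u Cu. replace w with (fun i => a i + z i) by (apply functional_extensionality; auto).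
    rewrite bform_addl, (proj1 (orth_plane_bform n G H HS a u Ha (proj1 (HC u Cu)))). ring. }
  destruct (lorentz_component_sign n G M HS (subspace_orth n G H) HND d b Hb Hb1 C w Hc HC Mw Hw)
    as [Hpos|Hneg].
  - exists z. split; auto. intros u Cu. rewrite Hzu; auto.
  - exists (fun i => -1 * z i). split; [apply (proj2 (proj2 (proj2 HZ))); auto|].
    intros u Cu. rewrite bform_scall, Hzu by auto. specialize (Hneg u Cu). lra.
Qed.

(* If [W] has no positive vector, some causal [u] of [M] is orthogonal to [W], hence to
   [Z]; [u] or [-u] lies in [C]. *)
Lemma no_orth_in_component_pos C : connected_component n C (causal_cone n G M) ->
  ~ (exists u, orth n G Z u /\ C u) -> has_pos_vector n G W.
Proof.
  intros HC Hv. apply NNPP; intro HnP.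
  pose proof (subspace_orth n G H) as HM.
  destruct (lorentz_causal_orth n G M HS HM d b Hb Hb1 W subspace_sinter_sum_orth (fun x Wx => proj2 Wx) HnP)
    as [u [Cu Hperp]].
  assert (Zu : orth n G Z u).
  { split; [apply (proj1 HM), (proj1 Cu)|]. intros z Zz.
    assert (Hvz : vec n z) by (apply (proj1 HZ); auto).
    rewrite (bform_orth_plane_split n G H r h HS HH Hh u z (proj1 Cu) Hvz).
    apply Hperp. split; [|apply (sub_proj_plane_orth n G H r h HH Hh Hhp); auto].
    exists (fun i => -1 * proj_plane n G r h z i), z. repeat split; auto; [|intros; ring].
    apply (proj2 (proj2 (proj2 HH))), (proj_plane_in n G H r h HH Hh). }
  destruct (lorentz_component_contains_half n G M HS HM HND d b Hb Hb1 C HC) as [e1 [Me [He Hsub]]].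
  pose proof (lorentz_causal_not_orth n G M HS HM HND d b Hb Hb1 e1 u Me He Cu) as Hnz.
  destruct (Rtotal_order (B e1 u) 0) as [Hl|[|Hg]]; [|contradiction|].
  - apply Hv. exists (fun i => -1 * u i). split.
    + apply (subspace_orth n G Z); auto.
    + apply Hsub; [apply causal_cone_scal; auto; lra|]. rewrite bform_scalr. lra.
  - apply Hv. exists u. auto.
Qed.

End Lorentz.

End Extension.

Theorem lemma2 (n k l : nat) (G : nat -> nat -> R) (Z H : Vec -> Prop) :
  pseudo_euclidean n G k l ->
  (2 <= k)%nat -> (2 <= l)%nat ->
  subspace n Z -> (exists p, qplus n G Z p /\ (1 <= p)%nat) ->
  pos_plane n G H (k - 1) ->
  signature n G (orth n G H) 1 l /\
  forall C : Vec -> Prop,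
    connected_component n C (causal_cone n G (orth n G H)) ->
    (extendable n G k Z H <-> qplus n G (ssum H Z) k) /\
    (qplus n G (ssum H Z) k <->
       exists p, qplus n G (sinter (ssum H Z) (orth n G H)) p /\ (1 <= p)%nat) /\
    ((exists p, qplus n G (sinter (ssum H Z) (orth n G H)) p /\ (1 <= p)%nat) <->
       exists z, Z z /\ forall u, C u -> bform n G z u > 0) /\
    ((exists z, Z z /\ forall u, C u -> bform n G z u > 0) <->
       ~ exists u, orth n G Z u /\ C u).
Proof.
  intros [HS [HN [me [e [He [Hpe [Hne _]]]]]]] Hk _ HZ _ HPH.
  destruct k as [|r]; [lia|]. replace (S r - 1)%nat with r in * by lia.
  destruct (pos_plane_obasis n G H r HS HPH) as [h [Hh Hhp]].
  pose proof (proj1 HPH) as HH.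
  destruct (orth_plane_signature n G H r h HS HH Hh Hhp (S r) l me e HN He Hpe Hne)
    as [d [b [Hb [Hb1 [Hbl Hbnz]]]]].
  replace (S r - r)%nat with 1%nat in Hb1 by lia.
  split; [exists d, b; auto|]. intros C HC.
  pose proof (orth_plane_nondegenerate n G H r h HS HH Hh Hhp HN) as HND.
  pose proof (extendable_pos n G H Z r h HS HH HZ Hh).
  pose proof (pos_extendable n G H Z r h HS HH HZ Hh Hhp).
  pose proof (qplus_sum_iff_pos n G H Z r h HS HH HZ Hh Hhp me e He Hpe).
  pose proof (qplus_pos_iff n G _ HS (subspace_sinter_sum_orth n G H Z HH HZ)).
  pose proof (exists_pos_on_component n G H Z HS HZ HND d b Hb Hb1 C (proj1 (proj2 (proj2 HC))) (proj1 HC)).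
  pose proof (no_orth_in_component_pos n G H Z r h HS HH HZ Hh Hhp HND d b Hb Hb1 C HC).
  pose proof (pos_on_component_no_orth n G Z C HS).
  tauto.
Qed.
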